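(* Let $m\in\mathbb{N}$, let $\frac{m-1}{m}<\lambda\le\frac{m}{m+1}$, and let $f(x)=\lfloor\lambda x\rfloor$ for $x\in\mathbb{R}$, with $f^n$ its $n$-fold iterate. Then: - $\lim_{n\to\infty}f^n(x)=0$ for all $x\in[0,+\infty)$; - for each $k\in\{-1,-2,\dots,-m\}$, $\lim_{n\to\infty}f^n(x)=k$ for all $x\in\left[\frac{k}{\lambda},\frac{k+1}{\lambda}\right)$; - $\lim_{n\to\infty}f^n(x)=-m$ for all $x\in\left(-\infty,-\frac{m}{\lambda}\right)$.
   Context: $\lfloor x\rfloor=\max\{m\in\mathbb{Z}: m\le x\}$ denotes the floor function; $\mathbb{N}=\{1,2,\dots\}$. *)

From Stdlib Require Import Reals.
Open Scope R_scope.

(* floor x = max { m in Z | m <= x }. In Stdlib, up x is the unique integer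
   with x < IZR (up x) <= x + 1, so the floor is up x - 1 (= Int_part x). *)
Definition rfloor (x : R) : R := IZR (up x - 1).

Definition ffloor (lambda : R) (x : R) : R := rfloor (lambda * x).

Fixpoint fiter (f : R -> R) (n : nat) (x : R) : R :=
  match n with
  | O => x
  | S k => f (fiter f k x)
  end.

From Stdlib Require Import Reals Lra Lia ZArith.
Open Scope R_scope.

(* After one step every orbit consists of integers.  On the integers, [f]
   fixes each [k] with [-m <= k <= -1] because [(1 - lambda) m < 1]; it
   moves a positive integer strictly down but not below [0] since
   [0 < lambda < 1]; and it moves an integer [z < -m] strictly up but not
   above [-m] since [(1 - lambda) (m + 1) >= 1].  Hence every orbit is
   eventually constant, with the limits claimed. *)

Lemma rfloor_spec (y : R) : rfloor y <= y < rfloor y + 1.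
Proof. unfold rfloor; destruct (archimed y); rewrite minus_IZR; lra. Qed.

Lemma rfloor_unique (z : Z) (y : R) : IZR z <= y < IZR z + 1 -> rfloor y = IZR z.
Proof.
  intros Hz; pose proof (rfloor_spec y) as Hy; unfold rfloor in *.
  apply f_equal, Z.le_antisymm; apply Zlt_succ_le, lt_IZR; rewrite succ_IZR; lra.
Qed.

Lemma fiter_S_inner (f : R -> R) (n : nat) (x : R) :
  fiter f (S n) x = fiter f n (f x).
Proof.
  revert x; induction n as [|n IH]; intros x; [reflexivity|].
  simpl in *; now rewrite IH.
Qed.

Lemma fiter_add (f : R -> R) (n p : nat) (x : R) :
  fiter f (n + p) x = fiter f n (fiter f p x).
Proof. induction n as [|n IH]; simpl; congruence. Qed.

Lemma fiter_fixpoint (f : R -> R) (c : R) (n : nat) : f c = c -> fiter f n c = c.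
Proof. intros Hc; induction n as [|n IH]; simpl; [|rewrite IH]; auto. Qed.

Lemma Un_cv_fiter_fixpoint (f : R -> R) (c x : R) (N : nat) :
  f c = c -> fiter f N x = c -> Un_cv (fun n => fiter f n x) c.
Proof.
  intros Hc HN eps Heps; exists N; intros n Hn.
  replace n with ((n - N) + N)%nat by lia.
  rewrite fiter_add, HN, (fiter_fixpoint f c _ Hc).
  unfold R_dist; rewrite Rminus_diag, Rabs_R0; lra.
Qed.

Lemma fiter_int_descent (f : R -> R) (P : Z -> Prop) (c : Z) :
  f (IZR c) = IZR c ->
  (forall z, P z -> z <> c ->
     exists w, f (IZR z) = IZR w /\ P w /\ (Z.abs (w - c) < Z.abs (z - c))%Z) ->
  forall z, P z -> exists N, fiter f N (IZR z) = IZR c.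
Proof.
  intros Hc Hstep.
  enough (H : forall n z, P z -> (Z.abs (z - c) <= Z.of_nat n)%Z ->
                fiter f n (IZR z) = IZR c).
  { intros z Hz; exists (Z.abs_nat (z - c)); apply H; [exact Hz|].
    rewrite Zabs2Nat.id_abs; lia. }
  induction n as [|n IH]; intros z Hz Hn.
  - replace z with c by lia; reflexivity.
  - destruct (Z.eq_dec z c) as [->|Hzc]; [now apply fiter_fixpoint|].
    destruct (Hstep z Hz Hzc) as (w & Hw & Pw & Hwc).
    rewrite fiter_S_inner, Hw; apply IH; [exact Pw | lia].
Qed.

Lemma ffloor_integral (lambda x : R) :
  exists w, ffloor lambda x = IZR w /\ IZR w <= lambda * x < IZR w + 1.
Proof. exists (up (lambda * x) - 1)%Z; split; [reflexivity | apply rfloor_spec]. Qed.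

Lemma ffloor_0 (lambda : R) : ffloor lambda 0 = 0.
Proof. apply rfloor_unique; lra. Qed.

Lemma ffloor_nonneg (lambda x : R) :
  0 <= lambda -> 0 <= x -> exists w, ffloor lambda x = IZR w /\ (0 <= w)%Z.
Proof.
  intros Hl Hx; destruct (ffloor_integral lambda x) as (w & Hw & Hw1 & Hw2).
  exists w; split; [exact Hw|].
  assert (-1 < w)%Z by (apply lt_IZR; nra); lia.
Qed.

Lemma ffloor_basin (lambda x : R) (k : Z) :
  0 < lambda -> IZR k / lambda <= x < (IZR k + 1) / lambda ->
  ffloor lambda x = IZR k.
Proof.
  intros Hl [Hx1 Hx2]; apply rfloor_unique.
  apply (Rmult_le_compat_l lambda) in Hx1; [|lra].
  apply (Rmult_lt_compat_l lambda) in Hx2; [|lra].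
  assert (Hcancel : forall a, lambda * (a / lambda) = a) by (intros; field; lra).
  rewrite Hcancel in Hx1, Hx2; lra.
Qed.

Lemma ffloor_below (lambda x : R) (c : Z) :
  0 < lambda -> x < IZR c / lambda ->
  exists w, ffloor lambda x = IZR w /\ (w <= c)%Z.
Proof.
  intros Hl Hx; destruct (ffloor_integral lambda x) as (w & Hw & Hw1 & Hw2).
  exists w; split; [exact Hw|].
  apply (Rmult_lt_compat_l lambda) in Hx; [|lra].
  replace (lambda * (IZR c / lambda)) with (IZR c) in Hx by (field; lra).
  apply Z.lt_le_incl, lt_IZR; lra.
Qed.

Lemma fiter_ffloor_nonneg_int (lambda : R) (z : Z) :
  0 <= lambda < 1 -> (0 <= z)%Z -> exists N, fiter (ffloor lambda) N (IZR z) = 0.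
Proof.
  intros Hl; apply (fiter_int_descent _ (fun z => 0 <= z)%Z 0%Z); [apply ffloor_0|].
  intros y Hy Hy0; destruct (ffloor_integral lambda (IZR y)) as (w & Hw & Hw1 & Hw2).
  assert (Hyr : 1 <= IZR y) by (apply IZR_le; lia).
  assert (w < y)%Z by (apply lt_IZR; nra).
  assert (-1 < w)%Z by (apply lt_IZR; nra).
  exists w; repeat split; [exact Hw | lia | lia].
Qed.

Section FloorMap.

Variables (m : nat) (lambda : R).
Hypothesis m_pos : (1 <= m)%nat.
Hypothesis lambda_gt : (INR m - 1) / INR m < lambda.
Hypothesis lambda_le : lambda <= INR m / (INR m + 1).

Lemma INR_m_ge1 : 1 <= INR m.
Proof. apply (le_INR 1); exact m_pos. Qed.

Lemma lambda_m_gt : INR m - 1 < lambda * INR m.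
Proof.
  pose proof INR_m_ge1.
  apply (Rmult_lt_compat_r (INR m)) in lambda_gt; [|lra].
  unfold Rdiv in lambda_gt; rewrite Rmult_assoc, Rinv_l in lambda_gt by lra; lra.
Qed.

Lemma lambda_m1_le : lambda * (INR m + 1) <= INR m.
Proof.
  pose proof INR_m_ge1.
  apply (Rmult_le_compat_r (INR m + 1)) in lambda_le; [|lra].
  unfold Rdiv in lambda_le; rewrite Rmult_assoc, Rinv_l in lambda_le by lra; lra.
Qed.

Lemma lambda_pos : 0 < lambda.
Proof. pose proof INR_m_ge1; pose proof lambda_m_gt; nra. Qed.

Lemma lambda_lt_1 : lambda < 1.
Proof. pose proof INR_m_ge1; pose proof lambda_m1_le; nra. Qed.

Lemma ffloor_fixpoint (k : Z) :
  (- Z.of_nat m <= k <= -1)%Z -> ffloor lambda (IZR k) = IZR k.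
Proof.
  intros Hk; apply rfloor_unique.
  assert (- INR m <= IZR k) by (rewrite INR_IZR_INZ, <- opp_IZR; apply IZR_le; lia).
  assert (IZR k <= -1) by (apply IZR_le; lia).
  pose proof lambda_m_gt; pose proof lambda_lt_1; nra.
Qed.

Lemma fiter_ffloor_below_int (z : Z) :
  (z <= - Z.of_nat m)%Z ->
  exists N, fiter (ffloor lambda) N (IZR z) = IZR (- Z.of_nat m).
Proof.
  apply (fiter_int_descent _ (fun z => z <= - Z.of_nat m)%Z); [apply ffloor_fixpoint; lia|].
  intros y Hy Hym; destruct (ffloor_integral lambda (IZR y)) as (w & Hw & Hw1 & Hw2).
  assert (Hyr : IZR y <= - INR m - 1).
  { rewrite INR_IZR_INZ, <- opp_IZR, <- minus_IZR; apply IZR_le; lia. }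
  pose proof INR_m_ge1; pose proof lambda_m_gt; pose proof lambda_m1_le.
  pose proof lambda_pos; pose proof lambda_lt_1.
  (* [(1 - lambda) (-y) >= (1 - lambda) (m + 1) >= 1] pushes [f y] above [y],
     while [lambda (m + 1) > m - 1] keeps it at most [-m]. *)
  assert (y < w)%Z by (apply lt_IZR; nra).
  assert (w < - Z.of_nat m + 1)%Z.
  { apply lt_IZR; rewrite plus_IZR, opp_IZR, <- INR_IZR_INZ; nra. }
  exists w; repeat split; [exact Hw | lia | lia].
Qed.

End FloorMap.

Theorem theorem2 (m : nat) (lambda : R) :
  (1 <= m)%nat ->
  (INR m - 1) / INR m < lambda ->
  lambda <= INR m / (INR m + 1) ->
  (forall x : R, 0 <= x -> Un_cv (fun n => fiter (ffloor lambda) n x) 0) /\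
  (forall k : Z, (- Z.of_nat m <= k <= -1)%Z ->
     forall x : R, IZR k / lambda <= x < (IZR k + 1) / lambda ->
       Un_cv (fun n => fiter (ffloor lambda) n x) (IZR k)) /\
  (forall x : R, x < - INR m / lambda ->
     Un_cv (fun n => fiter (ffloor lambda) n x) (- INR m)).
Proof.
  intros Hm Hlow Hupp.
  pose proof (lambda_pos m lambda Hm Hlow) as Hl0.
  pose proof (lambda_lt_1 m lambda Hm Hupp) as Hl1.
  pose proof (ffloor_fixpoint m lambda Hm Hlow Hupp) as Hfix.
  split; [|split].
  - intros x Hx.
    destruct (ffloor_nonneg lambda x) as (w & Hw & Hw0); [lra | exact Hx |].
    destruct (fiter_ffloor_nonneg_int lambda w) as [N HN]; [lra | exact Hw0 |].
    apply (Un_cv_fiter_fixpoint _ _ _ (S N)); [apply ffloor_0|].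
    now rewrite fiter_S_inner, Hw.
  - intros k Hk x Hx.
    apply (Un_cv_fiter_fixpoint _ _ _ 1); [now apply Hfix|].
    exact (ffloor_basin lambda x k Hl0 Hx).
  - replace (- INR m) with (IZR (- Z.of_nat m)) by now rewrite opp_IZR, <- INR_IZR_INZ.
    intros x Hx.
    destruct (ffloor_below lambda x (- Z.of_nat m)) as (w & Hw & Hwm); [exact Hl0 | exact Hx |].
    destruct (fiter_ffloor_below_int m lambda Hm Hlow Hupp w Hwm) as [N HN].
    apply (Un_cv_fiter_fixpoint _ _ _ (S N)); [apply Hfix; lia|].
    now rewrite fiter_S_inner, Hw.
Qed.
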